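(* Let $\Lambda$ be a finite interval which is the union of three consecutive intervals $\Lambda_l,\Lambda_m,\Lambda_r$ with $|\Lambda_m|\ge6$, and put $\Lambda_1=\Lambda_l\cup\Lambda_m$, $\Lambda_2=\Lambda_m\cup\Lambda_r$. Then $C_\Lambda=C_{\Lambda_1}C_{\Lambda_2}=C_{\Lambda_2}C_{\Lambda_1}$.
   Context: $\mathcal H_\Lambda=\bigotimes_{x\in\Lambda}\mathbb C^2$ with orthonormal basis $|\boldsymbol\sigma\rangle$, $\boldsymbol\sigma\in\{0,1\}^\Lambda$. Tilings of a finite interval: a tile occupies consecutive sites and carries a 0/1 word (its particle content): void $0$; monomer $100$; dimer $011000$; left boundary dimer $11000$ (allowed only as the first tile); and, allowed only as the last tile: right dimer $011$, right 1-monomer $1$, right 2-monomer $10$, truncated 1-dimer $0110$, truncated 2-dimer $01100$. A root tiling is a tiling by consecutive tiles consisting of voids and monomers, optionally with a left boundary dimer as first tile and optionally with one of right dimer, right 1-monomer, right 2-monomer as last tile. A VMD tiling derived from a root tiling $R$ is obtained by choosing disjoint pairs of consecutive tiles of $R$, each either two monomers (replaced by a dimer) or a monomer followed by a right $j$-monomer, $j\in\{1,2\}$ (replaced by the truncated $j$-dimer). $\mathcal D_{\Lambda'}$ is the set of all VMD tilings of $\Lambda'$ (over all root tilings), and $\boldsymbol\sigma_{\Lambda'}(\mathbf D)$ the concatenated particle content. For $\Lambda'\subseteq\Lambda$, $\mathcal C_{\Lambda'}=\operatorname{span}\{|\boldsymbol\sigma_{\Lambda'}(\mathbf D)\rangle:\mathbf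 D\in\mathcal D_{\Lambda'}\}\subseteq\mathcal H_{\Lambda'}$ and $C_{\Lambda'}$ is the orthogonal projection in $\mathcal H_\Lambda$ onto $\mathcal C_{\Lambda'}\otimes\mathcal H_{\Lambda\setminus\Lambda'}$. *)

(* Quantum spin chain Hilbert space H_Lambda = (C^2)^{(x) Lambda}
   is modelled as row vectors indexed by configurations sigma : {ffun 'I_n -> bool}
   (the orthonormal basis |sigma>), with coefficients in an arbitrary
   numClosedFieldType C (e.g. the complex numbers).  Operators are square
   matrices acting on row vectors; orthogonal projections are given by the
   library's [proj_ortho] (mathcomp/algebra/spectral.v). *)
From HB Require Import structures.
From mathcomp Require Import all_boot all_order all_algebra.
From Stdlib Require Import ClassicalEpsilon.
Set Implicit Arguments.
Unset Strict Implicit.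
Unset Printing Implicit Defensive.
Import Order.TTheory GRing.Theory Num.Theory.
Local Open Scope ring_scope.

Inductive tile : Type :=
  | Void
  | Mono
  | Dimer
  | LDimer   (* 11000, only as first tile *)
  | RDimer   (* 011, only as last tile *)
  | RMono1   (* 1, only as last tile *)
  | RMono2   (* 10, only as last tile *)
  | TDimer1  (* 0110, only as last tile *)
  | TDimer2. (* 01100, only as last tile *)

Definition tile_content (t : tile) : seq bool :=
  match t with
  | Void => [:: false]
  | Mono => [:: true; false; false]
  | Dimer => [:: false; true; true; false; false; false]
  | LDimer => [:: true; true; false; false; false]
  | RDimer => [:: false; true; true]
  | RMono1 => [:: true]
  | RMono2 => [:: true; false]
  | TDimer1 => [:: false; true; true; false]
  | TDimer2 => [:: false; true; true; false; false]
  end.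

Definition tiling_content (D : seq tile) : seq bool :=
  flatten (map tile_content D).

Definition root_tiling (R : seq tile) : Prop :=
  exists (pre mid suf : seq tile),
    R = pre ++ mid ++ suf /\
    (pre = [::] \/ pre = [:: LDimer]) /\
    (forall t, List.In t mid -> t = Void \/ t = Mono) /\
    (suf = [::] \/ suf = [:: RDimer] \/ suf = [:: RMono1] \/ suf = [:: RMono2]).

Inductive derived : seq tile -> seq tile -> Prop :=
  | der_nil : derived [::] [::]
  | der_keep t R D : derived R D -> derived (t :: R) (t :: D)
  | der_dimer R D : derived R D -> derived [:: Mono, Mono & R] (Dimer :: D)
  | der_trunc1 R D : derived R D -> derived [:: Mono, RMono1 & R] (TDimer1 :: D)
  | der_trunc2 R D : derived R D -> derived [:: Mono, RMono2 & R] (TDimer2 :: D).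

Definition vmd_tiling (L : nat) (D : seq tile) : Prop :=
  exists R, root_tiling R /\ derived R D /\ size (tiling_content D) = L.

Definition vmd_word (L : nat) (w : seq bool) : Prop :=
  exists D, vmd_tiling L D /\ tiling_content D = w.

Definition decP (P : Prop) : bool :=
  if excluded_middle_informative P then true else false.

(* The chain Lambda = {0,...,n-1}; configurations and their restriction to the
   subinterval [a, b) (read left to right). *)
Definition config (n : nat) := {ffun 'I_n -> bool}.

Definition restr (n : nat) (s : config n) (a b : nat) : seq bool :=
  map (fun i : 'I_n => s i)
      (filter (fun i : 'I_n => (a <= i < b)%N) (enum 'I_n)).

Definition dimH (n : nat) := #|{: config n}|.

Definition ket (C : nzRingType) (n : nat) (s : config n) : 'rV[C]_(dimH n) :=
  delta_mx 0 (enum_rank s).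

(* C_{[a,b)} (x) H_{Lambda \ [a,b)} = span{ |sigma> : sigma|_{[a,b)} is the
   particle content of a VMD tiling of [a,b) }. *)
Definition Cspace (C : fieldType) (n a b : nat) : 'M[C]_(dimH n) :=
  (\sum_(s : config n | decP (vmd_word (b - a) (restr s a b))) <<ket C s>>)%MS.

Definition Cproj (C : numClosedFieldType) (n a b : nat) : 'M[C]_(dimH n) :=
  proj_ortho (Cspace C n a b).

(* Every projection C_[a,b) is diagonal in the basis |sigma>: it keeps |sigma>
   exactly when the word sigma|_[a,b) is the particle content of a VMD tiling.
   So both identities say: a word on Lambda is a VMD word iff its restrictions to
   Lambda_1 and Lambda_2 are.  VMD words are recognised by a finite automaton whose
   states record a phase and the unread rest of the current tile.  Its 16
   reachable states are checked by computation to be synchronised by 6 letters: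
   a word of length 6 leads from any reachable state either nowhere or to the
   same states as from the start.  Hence the automaton only remembers the last 6
   letters, which gives closure under suffixes of length >= 6 and lets two VMD
   words overlapping in >= 6 letters be glued.  A second check (a live state
   reaches an accepting one within any 5 letters) gives closure under prefixes of
   length >= 5. *)

From Pilot Require Import Defs.
From HB Require Import structures.
From mathcomp Require Import all_boot all_order all_algebra zify.
From Stdlib Require Import ClassicalEpsilon.
Set Implicit Arguments.
Unset Strict Implicit.
Unset Printing Implicit Defensive.

Definition tile_eq_dec : comparable tile.
Proof. by rewrite /comparable /decidable; decide equality. Defined.
HB.instance Definition _ := comparableMixin tile_eq_dec.

(** * Tilings as phase-admissible tile sequences *)

(* Phase 0: no tile placed yet; 1: further tiles may follow, but no left
   boundary dimer; 2: a last-only tile has been placed. *)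
Definition tile_phase (p : nat) (t : tile) : option nat :=
  match p, t with
  | 0, LDimer => Some 1
  | _, LDimer => None
  | (0 | 1), (Void | Mono | Dimer) => Some 1
  | (0 | 1), _ => Some 2
  | _, _ => None
  end.

Definition root_phase (p : nat) (t : tile) : option nat :=
  match t with Dimer | TDimer1 | TDimer2 => None | _ => tile_phase p t end.

Fixpoint admissible (phase : nat -> tile -> option nat) (p : nat) (D : seq tile) : bool :=
  if D is t :: D' then
    if phase p t is Some p' then admissible phase p' D' else false
  else true.

Lemma admissible_root1E R :
  admissible root_phase 1 R <->
  exists mid suf, [/\ R = mid ++ suf,
    forall t, List.In t mid -> t = Void \/ t = Mono &
    suf = [::] \/ suf = [:: RDimer] \/ suf = [:: RMono1] \/ suf = [:: RMono2]].
Proof.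
split.
- elim: R => [|t R IH]; first by exists [::], [::]; split => //; left.
  have end_R R' : admissible root_phase 2 R' -> R' = [::] by case: R' => [|[]].
  case: t => //= [/IH|/IH|/end_R->|/end_R->|/end_R->].
  + case=> mid [suf [-> Hmid Hsuf]].
    by exists (Void :: mid), suf; split => // t [<-|/Hmid]; tauto.
  + case=> mid [suf [-> Hmid Hsuf]].
    by exists (Mono :: mid), suf; split => // t [<-|/Hmid]; tauto.
  + by exists [::], [:: RDimer]; split => //; tauto.
  + by exists [::], [:: RMono1]; split => //; tauto.
  + by exists [::], [:: RMono2]; split => //; tauto.
- case=> mid [suf [-> Hmid Hsuf]].
  elim: mid Hmid => [_|t mid IH Hmid] /=; first by case: Hsuf => [|[|[|]]] ->.
  by case: (Hmid t (or_introl erefl)) => ->; apply: IH => t' Ht'; apply: Hmid; right.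
Qed.

Lemma root_tilingE R : root_tiling R <-> admissible root_phase 0 R.
Proof.
split.
- case=> pre [mid [suf [-> [Hpre [Hmid Hsuf]]]]].
  have bulk : admissible root_phase 1 (mid ++ suf).
    by apply/admissible_root1E; exists mid, suf.
  by case: Hpre => -> //=; move: bulk; case: (mid ++ suf) => [|[]].
- move=> HR.
  have [pre [R' [-> Hpre HR']]] : exists pre R', [/\ R = pre ++ R',
      pre = [::] \/ pre = [:: LDimer] & admissible root_phase 1 R'].
    case: R HR => [|t R HR]; first by exists [::], [::]; split; auto.
    have [Et|nL] := eqVneq t LDimer.
      by exists [:: LDimer], R; move: HR; rewrite Et; split; auto.
    exists [::], (t :: R); split; auto.
    by case: t HR nL.
  have [mid [suf [-> Hmid Hsuf]]] := proj1 (admissible_root1E R') HR'.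
  by exists pre, mid, suf.
Qed.

Lemma root_phase_tile_phase p t p' : root_phase p t = Some p' -> tile_phase p t = Some p'.
Proof. by case: t. Qed.

Lemma derived_admissible R D p :
  derived R D -> admissible root_phase p R -> admissible tile_phase p D.
Proof.
move=> dRD; elim: dRD p => {R D} [//|t R D _ IH|R D _ IH|R D _ IH|R D _ IH] p /=.
- by case E: (root_phase p t) => [p'|] //; rewrite (root_phase_tile_phase E); exact: IH.
- by case: p => [|[|p]] //= /IH.
- by case: p => [|[|p]] //= /IH.
- by case: p => [|[|p]] //= /IH.
Qed.

Definition unpair (t : tile) : seq tile :=
  match t with
  | Dimer => [:: Mono; Mono]
  | TDimer1 => [:: Mono; RMono1]
  | TDimer2 => [:: Mono; RMono2]
  | _ => [:: t]
  end.

Definition root_of (D : seq tile) : seq tile := flatten (map unpair D).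

Lemma derived_root_of D : derived (root_of D) D.
Proof. by elim: D => [|[] D IH]; constructor. Qed.

Lemma admissible_root_of p D :
  admissible tile_phase p D -> admissible root_phase p (root_of D).
Proof. by elim: D p => [|t D IH] [|[|p]] //=; case: t => //= /IH. Qed.

Lemma vmd_word_admissible L w :
  vmd_word L w <->
  size w = L /\ exists2 D, admissible tile_phase 0 D & tiling_content D = w.
Proof.
split.
- case=> D [[R [/root_tilingE HR [dRD <-]]] <-]; split => //.
  by exists D => //; apply: derived_admissible dRD HR.
- case=> <- [D HD <-]; exists D; split => //; exists (root_of D).
  by split; [apply/root_tilingE/admissible_root_of | split; first exact: derived_root_of].
Qed.

(** * An automaton recognising VMD words *)

Definition tiles := [:: Void; Mono; Dimer; LDimer; RDimer; RMono1; RMono2; TDimer1; TDimer2].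

Lemma mem_tiles t : t \in tiles.
Proof. by case: t. Qed.

(* A state (p, u): phase p, with u the still unread part of the current tile. *)
Definition state := (nat * seq bool)%type.

Definition start : state := (0, [::]).

Definition enter (p : nat) (a : bool) (t : tile) : option state :=
  if tile_phase p t is Some p' then
    if tile_content t is b :: u then (if a == b then Some (p', u) else None) else None
  else None.

Definition next_states (c : state) (a : bool) : seq state :=
  if c.2 is b :: u then (if a == b then [:: (c.1, u)] else [::])
  else pmap (enter c.1 a) tiles.

Definition accepting (c : state) : bool := nilp c.2.

Fixpoint accepts (c : state) (w : seq bool) : bool :=
  if w is a :: w' then has (accepts^~ w') (next_states c a) else accepting c.

Lemma accepts_pendingP p u w :
  reflect (exists2 w', w = u ++ w' & accepts (p, [::]) w') (accepts (p, u) w).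
Proof.
elim: u w => [|b u IH] [|a w] /=.
- by apply: (iffP idP) => [H|[w' <- //]]; exists [::].
- by apply: (iffP idP) => [H|[w' <- //]]; exists (a :: w).
- by constructor; case.
- rewrite /next_states /=; case: (a =P b) => [<-|ab] /=; last first.
    by constructor; case=> w' [/ab].
  rewrite orbF; apply: (iffP (IH w)) => [[w' -> H]|[w' [->] H]]; by exists w'.
Qed.

Lemma has_pmap (T U : Type) (f : T -> option U) (q : pred U) (s : seq T) :
  has q (pmap f s) = has (fun x => oapp q false (f x)) s.
Proof. by elim: s => //= x s IH; case: (f x) => /= [y|]; rewrite IH. Qed.

Lemma acceptsP p w :
  reflect (exists2 D, admissible tile_phase p D & tiling_content D = w)
          (accepts (p, [::]) w).
Proof.
apply: (iffP idP) => [|[D HD <-]].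
- elim: {w}(size w) {-2}w (leqnn (size w)) p => [|k IH] [|a w] //= w_le p;
    try by exists [::].
  rewrite has_pmap => /hasP[t _]; rewrite /enter.
  case tp: (tile_phase p t) => [p'|] //; case ct: (tile_content t) => [|b u] //=.
  case: eqP => // -> /accepts_pendingP[w' Ew acc'].
  have [|D HD Dw'] := IH w' _ p' acc'; first by move: w_le; rewrite Ew size_cat; lia.
  by exists (t :: D); rewrite /= ?tp // /tiling_content /= ct Ew -Dw'.
- elim: D p HD => [|t D IH] p //=.
  case tp: (tile_phase p t) => [p'|] // /IH acc.
  rewrite /tiling_content /=; case ct: (tile_content t) => [|b u]; first by case: t tp ct.
  rewrite /= has_pmap; apply/hasP; exists t; first exact: mem_tiles.
  rewrite /enter tp ct eqxx /=; apply/accepts_pendingP; by exists (tiling_content D).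
Qed.

Fixpoint saturate (k : nat) (S : seq state) : seq state :=
  if k is k'.+1 then
    saturate k' (undup (S ++ flatten [seq next_states c a | c <- S, a <- [:: true; false]]))
  else S.

(* Twelve rounds suffice: closure of the result is checked by [states_closed]. *)
Definition states : seq state := Eval vm_compute in saturate 12 [:: start].

Lemma states_closed :
  all (fun c => all (fun a => all (mem states) (next_states c a)) [:: true; false]) states.
Proof. by vm_compute. Qed.

Lemma next_states_sub c a : c \in states -> {subset next_states c a <= states}.
Proof.
move=> cS; apply/allP; have /allP/(_ a) := allP states_closed c cS.
by apply; case: a.
Qed.

Definition step_set (Q : seq state) (a : bool) : seq state :=
  [seq c <- states | has (fun c0 => c \in next_states c0 a) Q].

Definition run (Q : seq state) (w : seq bool) : seq state := foldl step_set Q w.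

Lemma run_cat Q u v : run Q (u ++ v) = run (run Q u) v.
Proof. exact: foldl_cat. Qed.

Lemma run_nil w : run [::] w = [::].
Proof. by elim: w => //= a w; rewrite /step_set /= filter_pred0. Qed.

Lemma run_neq0_cat Q u v : run Q (u ++ v) != [::] -> run Q u != [::].
Proof. by rewrite run_cat; apply: contraNneq => ->; rewrite run_nil. Qed.

Lemma run_sub Q w : {subset Q <= states} -> {subset run Q w <= states}.
Proof.
elim: w Q => [//|a w IH] Q _; apply: IH => c.
by rewrite mem_filter => /andP[].
Qed.

Lemma eq_run Q Q' w : Q =i Q' -> run Q w =i run Q' w.
Proof.
case: w => [//|a w] eqQ; rewrite /run /= (_ : step_set Q a = step_set Q' a) //.
by apply: eq_filter => c; apply: eq_has_r.
Qed.

Lemma mem_step_set Q a c : {subset Q <= states} ->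
  (c \in step_set Q a) = has (fun c0 => c \in next_states c0 a) Q.
Proof.
move=> QS; rewrite mem_filter andb_idr // => /hasP[c0 /QS c0S].
exact: next_states_sub.
Qed.

Lemma mem_run Q w c : (c \in run Q w) = has (fun c0 => c \in run [:: c0] w) Q.
Proof.
elim: w Q => [|a w IH] Q /=.
  by elim: Q => //= c0 Q IHQ; rewrite in_cons IHQ mem_seq1.
rewrite IH; apply/esym; under eq_has => c0 do rewrite IH.
apply/hasP/hasP => [[c0 c0Q /hasP[c1]]|[c1]].
  rewrite mem_filter /= orbF => /andP[c1n c1S] c1r.
  by exists c1 => //; rewrite mem_filter c1S andbT; apply/hasP; exists c0.
rewrite mem_filter => /andP[/hasP[c0 c0Q c1n] c1S] c1r.
by exists c0 => //; apply/hasP; exists c1; rewrite // mem_filter /= orbF c1n.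
Qed.

Lemma accepts_run Q w : {subset Q <= states} ->
  has (accepts^~ w) Q = has accepting (run Q w).
Proof.
elim: w Q => [//|a w IH] Q QS /=; rewrite -IH; last first.
  by move=> c; rewrite mem_filter => /andP[].
apply/hasP/hasP => [[c0 c0Q /hasP[c cn acc]]|[c]].
  by exists c => //; rewrite mem_step_set //; apply/hasP; exists c0.
by rewrite mem_step_set // => /hasP[c0 c0Q cn] acc; exists c0 => //; apply/hasP; exists c.
Qed.

(** * Six letters synchronise the automaton *)

Fixpoint words (k : nat) : seq (seq bool) :=
  if k is k'.+1 then [seq b :: y | b <- [:: true; false], y <- words k'] else [:: [::]].

Lemma mem_words y : y \in words (size y).
Proof.
elim: y => [|b y IH] //=; rewrite cats0 mem_cat.
by case: b; apply/orP; [left | right]; apply/mapP; exists y.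
Qed.

Lemma states_sync6 :
  all (fun c => all (fun y => nilp (run [:: c] y) || (run [:: c] y == run [:: start] y))
                    (words 6)) states.
Proof. by vm_compute. Qed.

Lemma states_accepting5 :
  all (fun c => all (fun y => nilp (run [:: c] y) || has accepting (run [:: c] y))
                    (words 5)) states.
Proof. by vm_compute. Qed.

Lemma run_neq0_witness Q w : run Q w != [::] -> exists2 c0, c0 \in Q & run [:: c0] w != [::].
Proof.
case E: (run Q w) => [//|c s] _.
have /hasP[c0 c0Q cc0] : has (fun c0 => c \in run [:: c0] w) Q by rewrite -mem_run E mem_head.
by exists c0 => //; apply: contraTneq cc0 => ->.
Qed.

Lemma run_sync Q y : {subset Q <= states} -> size y = 6 -> run Q y != [::] ->
  run Q y =i run [:: start] y.
Proof.
move=> QS y6 /run_neq0_witness[c0 c0Q ne0].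
have sync c1 : c1 \in Q -> run [:: c1] y != [::] -> run [:: c1] y = run [:: start] y.
  move=> /QS c1S; have /allP/(_ y) := allP states_sync6 c1 c1S.
  by rewrite -y6 mem_words => /(_ isT)/orP[/nilP->|/eqP].
move=> c; rewrite mem_run; apply/hasP/idP => [[c1 c1Q cr]|].
  by rewrite -(sync c1) //; apply: contraTneq cr => ->.
by rewrite -(sync c0) // => cr; exists c0.
Qed.

Lemma run_accepting Q y : {subset Q <= states} -> size y = 5 -> run Q y != [::] ->
  has accepting (run Q y).
Proof.
move=> QS y5 /run_neq0_witness[c0 c0Q ne0].
have /allP/(_ y) := allP states_accepting5 c0 (QS _ c0Q).
rewrite -y5 mem_words => /(_ isT)/orP[/nilP e|/hasP[c cr acc]]; first by rewrite e in ne0.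
by apply/hasP; exists c; rewrite // mem_run; apply/hasP; exists c0.
Qed.

Definition vmd (w : seq bool) : bool := accepts start w.

Lemma vmd_wordE L w : vmd_word L w <-> size w = L /\ vmd w.
Proof.
by rewrite vmd_word_admissible; split=> -[-> /acceptsP].
Qed.

Lemma start_sub_states : {subset [:: start] <= states}.
Proof. by move=> c; rewrite mem_seq1 => /eqP->. Qed.

Lemma vmd_run w : vmd w = has accepting (run [:: start] w).
Proof.
rewrite -accepts_run; last exact: start_sub_states.
by rewrite /= orbF.
Qed.

Lemma run_start_sub w : {subset run [:: start] w <= states}.
Proof. exact/run_sub/start_sub_states. Qed.

Lemma run_start_sync u v : 6 <= size v -> run [:: start] (u ++ v) != [::] ->
  run [:: start] (u ++ v) =i run [:: start] v.
Proof.
move=> v6; rewrite -(cat_take_drop 6 v) catA => /run_neq0_cat.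
rewrite (run_cat _ (u ++ _)) (run_cat _ (take 6 v)) run_cat => ne; apply: eq_run.
exact: run_sync (@run_start_sub u) (size_takel v6) ne.
Qed.

Lemma vmd_run_neq0 w : vmd w -> run [:: start] w != [::].
Proof. by rewrite vmd_run; case: (run _ _). Qed.

Lemma vmd_suffix u v : 6 <= size v -> vmd (u ++ v) -> vmd v.
Proof.
move=> v6 uv; have E := run_start_sync v6 (vmd_run_neq0 uv).
by move: uv; rewrite !vmd_run (eq_has_r E).
Qed.

Lemma vmd_prefix u v : 5 <= size u -> vmd (u ++ v) -> vmd u.
Proof.
move=> u5 /vmd_run_neq0/run_neq0_cat.
rewrite vmd_run -(cat_take_drop (size u - 5) u) run_cat.
by apply: run_accepting; [exact: run_start_sub | rewrite size_drop subKn].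
Qed.

Lemma vmd_catE u v x : 6 <= size v -> vmd (u ++ v ++ x) = vmd (u ++ v) && vmd (v ++ x).
Proof.
move=> v6; apply/idP/andP => [uvx|[uv vx]].
  split; last by apply: (vmd_suffix (u := u)); rewrite // size_cat; lia.
  by apply: (vmd_prefix (v := x)); [rewrite size_cat; lia | rewrite -catA].
have E := eq_run x (run_start_sync v6 (vmd_run_neq0 uv)).
by move: vx; rewrite !vmd_run catA !(run_cat _ _ x) (eq_has_r E).
Qed.

Lemma vmd_take_drop W l m : 6 <= m -> l + m <= size W ->
  vmd W = vmd (take (l + m) W) && vmd (drop l W).
Proof.
move=> m6 lmW; set v := take m (drop l W).
have Wdec : W = take l W ++ v ++ drop m (drop l W) by rewrite !cat_take_drop.
have vm : size v = m by rewrite size_takel // size_drop; lia.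
by rewrite {1}Wdec vmd_catE ?vm // takeD cat_take_drop.
Qed.

Section KetProjections.

Variables (C : numClosedFieldType) (n : nat).
Local Open Scope ring_scope.

Definition span_kets (P : pred (config n)) : 'M[C]_(dimH n) :=
  (\sum_(s | P s) <<ket C s>>)%MS.

Lemma ket_proj_span_kets P s :
  ket C s *m proj_ortho (span_kets P) = if P s then ket C s else 0.
Proof.
case Ps: (P s).
  by apply: proj_ortho_id; apply: (sumsmx_sup s) => //; rewrite genmxE.
apply: proj_ortho_0; rewrite orthomx_sym; apply/sumsmx_subP => t Pt.
rewrite genmxE; apply/orthomx1P.
rewrite /ket trmx_delta map_delta_mx mul_delta_mx_cond (inj_eq enum_rank_inj).
by case: eqP => // ts; rewrite ts Ps in Pt.
Qed.

Lemma ket_mulmx_inj (A B : 'M[C]_(dimH n)) :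
  (forall s, ket C s *m A = ket C s *m B) -> A = B.
Proof.
move=> AB; apply/row_matrixP => i; rewrite !rowE.
by have := AB (enum_val i); rewrite /ket enum_valK.
Qed.

Lemma proj_span_kets_predI P Q R : P =1 predI Q R ->
  proj_ortho (span_kets P) = proj_ortho (span_kets Q) *m proj_ortho (span_kets R).
Proof.
move=> PQR; apply: ket_mulmx_inj => s.
rewrite ket_proj_span_kets mulmxA ket_proj_span_kets PQR /=.
by case: (Q s); rewrite ?mul0mx ?ket_proj_span_kets.
Qed.

End KetProjections.

Lemma decPP (P : Prop) : reflect P (Defs.decP P).
Proof. by rewrite /Defs.decP; case: (excluded_middle_informative P); constructor. Qed.

Lemma filter_iota_interval a b n : a <= b <= n ->
  [seq k <- iota 0 n | a <= k < b] = iota a (b - a).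
Proof.
move=> /andP[ab bn]; rewrite -(subnKC (leq_trans ab bn)) iotaD filter_cat add0n.
rewrite (@eq_in_filter _ _ pred0) ?filter_pred0 => [|k]; last first.
  by rewrite mem_iota => /andP[_ ka]; apply/negbTE; lia.
rewrite (@eq_in_filter _ _ (fun k => k < a + (b - a))) => [|k].
  by rewrite filter_iota_ltn //; lia.
by rewrite mem_iota (subnKC ab) => /andP[-> _].
Qed.

Lemma restrE n (s : config n) a b : a <= b <= n ->
  restr s a b = take (b - a) (drop a (codom s)).
Proof.
move=> abn; rewrite /restr codomE -map_drop -map_take; congr map.
apply: (inj_map val_inj); rewrite map_take map_drop val_enum_ord drop_iota take_iota.
have := filter_map val (fun k => a <= k < b) (enum 'I_n); rewrite val_enum_ord => <-.
rewrite filter_iota_interval // add0n; congr iota; lia.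
Qed.

Definition vmd_on n a b (s : config n) : bool := Defs.decP (vmd_word (b - a) (restr s a b)).

Lemma CprojE C n a b : Cproj C n a b = proj_ortho (span_kets C (@vmd_on n a b)).
Proof. by []. Qed.

Lemma vmd_onE n a b (s : config n) : a <= b <= n ->
  vmd_on a b s = vmd (take (b - a) (drop a (codom s))).
Proof.
move=> abn; rewrite /vmd_on restrE //; apply/decPP/idP => [/vmd_wordE[]//|vw].
apply/vmd_wordE; split=> //; rewrite size_takel // size_drop size_codom card_ord; lia.
Qed.

Local Open Scope ring_scope.

Theorem corollary2p4 (C : numClosedFieldType) (l m r : nat) :
  (0 < l)%N -> (6 <= m)%N -> (0 < r)%N ->
  let n := (l + m + r)%N in
  Cproj C n 0 n = Cproj C n 0 (l + m) *m Cproj C n l n /\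
  Cproj C n 0 n = Cproj C n l n *m Cproj C n 0 (l + m).
Proof.
(* Neither Lambda_l nor Lambda_r needs to be nonempty. *)
move=> _ m6 _ n.
have size_s (s : config n) : size (codom s) = n by rewrite size_codom card_ord.
have vmd_split (s : config n) : vmd_on 0 n s = vmd_on 0 (l + m) s && vmd_on l n s.
  have [ln lmn] : (l <= n /\ l + m <= n)%N by rewrite /n; lia.
  rewrite !vmd_onE ?ln ?lmn ?leqnn // !subn0 drop0.
  rewrite (@take_oversize _ n) ?size_s // (@take_oversize _ (n - l)) ?size_drop ?size_s //.
  by apply: vmd_take_drop; rewrite ?size_s.
by rewrite !CprojE; split; apply: proj_span_kets_predI => s /=; rewrite vmd_split // andbC.
Qed.
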